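(* Let $n\ge2$ and $k$ a field. Then $\mathsf{G}^0([n],k)$ is free abelian of rank $3$ with basis $[J_{0,n}]$, $[S_{[n]}]$, $T_{[n]}=[J_{0,n-1}]+[J_{1,n}]-[J_{1,n-1}]$, and $\mathsf{E}^0([n],k)$ is free abelian of rank $2$ with basis $[J_{0,n}]$, $T_{[n]}$. In particular the natural map $\mathsf{E}^0([n],k)\to\mathsf{G}^0([n],k)$ is split injective with cokernel generated by the image of $[S_{[n]}]$ (infinite cyclic).
   Context: $[n]$ is the poset $0<1<\cdots<n$ viewed as a category; $k[n]$-modules are functors to finite-dimensional $k$-vector spaces and $\mathrm{Gr}$ is the split Grothendieck group. For $0\le a\le b\le n$, $J_{a,b}$ is the module with value $k$ at $i\in\{a,\dots,b\}$, $0$ elsewhere, and identity maps $J_{a,b}(i<j)$ for $a\le i\le j\le b$. $S_{[n]}$ is the module with value $k$ everywhere and zero maps on strict relations. $\mathcal{E}^{[n]}_1$ is the poset of strict relations $i<j$ (written $ij$) with $ij\le i'j'$ iff $i\le i'$ and $j\le j'$; $\mathcal{G}^{[n]}_1$ is the poset of strict relations with $ij\le i'j'$ iff equal or $j\le i'$. In both, $\partial_0(ij)=j$, $\partial_1(ij)=i$. $\mathsf{E}^0([n],k)$ (resp. $\mathsf{G}^0([n],k)$) is the kernel of $\partial_0^*-\partial_1^*:\mathrm{Gr}(k[n])\to\mathrm{Gr}(k\mathcal{E}^{[n]}_1)$ (resp. $\to\mathrm{Gr}(k\mathcal{G}^{[n]}_1)$), with $F^*M=M\circ F$. The natural map $\mathsf{E}^0\to\mathsf{G}^0$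 is induced by the inclusion $\mathcal{G}^{[n]}_1\subseteq\mathcal{E}^{[n]}_1$ (identity on $\mathrm{Gr}(k[n])$). *)

From HB Require Import structures.
From mathcomp Require Import all_boot all_order all_algebra.
Set Implicit Arguments. Unset Strict Implicit. Unset Printing Implicit Defensive.
Import GRing.Theory.
Local Open Scope ring_scope.

(* A k-linear functor from (T,le) to finite-dimensional k-vector spaces, in
   coordinates: the space at x is k^(rdim x) (row vectors) and the map
   M(x <= y) is  v |-> v *m rmap x y.  Values of rmap at non-comparable
   pairs are irrelevant. *)
Record rep (T : Type) (k : fieldType) := Rep {
  rdim : T -> nat ;
  rmap : forall x y : T, 'M[k]_(rdim x, rdim y) }.

Section Reps.
Variables (T : Type) (k : fieldType).

Definition is_module (le : rel T) (M : rep T k) : Prop :=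
  (forall x, le x x -> rmap M x x = 1%:M) /\
  (forall x y z, le x y -> le y z -> rmap M x y *m rmap M y z = rmap M x z).

Definition zero_rep : rep T k := @Rep T k (fun _ => 0%N) (fun _ _ => 0).

Definition dsum (M N : rep T k) : rep T k :=
  @Rep T k (fun x => (rdim M x + rdim N x)%N)
    (fun x y => block_mx (rmap M x y) 0 0 (rmap N x y)).

Definition iso (le : rel T) (M N : rep T k) : Prop :=
  exists (f : forall x, 'M[k]_(rdim M x, rdim N x))
         (g : forall x, 'M[k]_(rdim N x, rdim M x)),
    (forall x, f x *m g x = 1%:M /\ g x *m f x = 1%:M) /\
    (forall x y, le x y -> rmap M x y *m f y = f x *m rmap N x y).

(* An element [M] - [N] is represented by the pair (M, N). *)
Definition vmod := (rep T k * rep T k)%type.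

Definition is_vmod (le : rel T) (x : vmod) : Prop :=
  is_module le x.1 /\ is_module le x.2.

Definition grEq (le : rel T) (x y : vmod) : Prop :=
  exists X : rep T k, is_module le X /\
    iso le (dsum (dsum x.1 y.2) X) (dsum (dsum y.1 x.2) X).

Definition cls (M : rep T k) : vmod := (M, zero_rep).
Definition vzero : vmod := (zero_rep, zero_rep).
Definition vadd (x y : vmod) : vmod := (dsum x.1 y.1, dsum x.2 y.2).
Definition vopp (x : vmod) : vmod := (x.2, x.1).
Definition vsub (x y : vmod) : vmod := vadd x (vopp y).
Definition vnat (m : nat) (x : vmod) : vmod := iter m (vadd x) vzero.
Definition vscale (z : int) (x : vmod) : vmod :=
  match z with
  | Posz m => vnat m x
  | Negz m => vopp (vnat m.+1 x)
  end.
End Reps.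

Definition pull (U T : Type) (k : fieldType) (F : U -> T) (M : rep T k) : rep U k :=
  @Rep U k (fun u => rdim M (F u)) (fun u v => rmap M (F u) (F v)).

Definition vpull (U T : Type) (k : fieldType) (F : U -> T) (x : vmod T k) :
  vmod U k := (pull F x.1, pull F x.2).

Definition leN (n : nat) : rel 'I_n.+1 := fun i j => (i <= j)%N.

Definition srel (n : nat) := {p : 'I_n.+1 * 'I_n.+1 | (p.1 < p.2)%N}.

Definition leE (n : nat) : rel (srel n) :=
  fun r s => ((sval r).1 <= (sval s).1)%N && ((sval r).2 <= (sval s).2)%N.
Definition leG (n : nat) : rel (srel n) :=
  fun r s => (sval r == sval s) || ((sval r).2 <= (sval s).1)%N.

Definition d0 (n : nat) (r : srel n) : 'I_n.+1 := (sval r).2.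
Definition d1 (n : nat) (r : srel n) : 'I_n.+1 := (sval r).1.

(* E^0([n],k) and G^0([n],k): kernels of d0^* - d1^* on Gr(k[n]) *)
Definition E0 (k : fieldType) (n : nat) (x : vmod 'I_n.+1 k) : Prop :=
  grEq (@leE n) (vpull (@d0 n) x) (vpull (@d1 n) x).
Definition G0 (k : fieldType) (n : nat) (x : vmod 'I_n.+1 k) : Prop :=
  grEq (@leG n) (vpull (@d0 n) x) (vpull (@d1 n) x).

Definition Jmod (k : fieldType) (n a b : nat) : rep 'I_n.+1 k :=
  @Rep 'I_n.+1 k (fun i => nat_of_bool ((a <= i)%N && (i <= b)%N))
    (fun i j => const_mx 1).

Definition Smod (k : fieldType) (n : nat) : rep 'I_n.+1 k :=
  @Rep 'I_n.+1 k (fun _ => 1%N) (fun i j => if i == j then 1%:M else 0).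

Definition Tcls (k : fieldType) (n : nat) : vmod 'I_n.+1 k :=
  vsub (vadd (cls (Jmod k n 0 n.-1)) (cls (Jmod k n 1 n))) (cls (Jmod k n 1 n.-1)).

From HB Require Import structures.
From mathcomp Require Import all_boot all_order all_algebra.
From mathcomp Require Import zify ring.
Set Implicit Arguments. Unset Strict Implicit. Unset Printing Implicit Defensive.
Import GRing.Theory.
Local Open Scope ring_scope.

(* A module over [n] is a direct sum of interval modules J_{a,b}, so its
   isomorphism class is determined by the ranks r(i,j) of the maps M(i <= j),
   and Gr(k[n]) embeds into integer-valued functions of pairs i <= j.
   Pulling back along d0, d1 and comparing along a relation ij <= i'j' of the
   face poset forces r(j,j') = r(i,i').  For G_1 these equations leave exactly
   the three values r(0,0), r(0,1), r(0,n) free; E_1 additionally relates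
   01 <= 02, which forces r(1,2) = r(0,0) and hence r(0,0) = r(0,1).  The
   classes [J_{0,n}], [S_[n]] and T_[n] realise these values independently. *)

Lemma mulmx_cast1 (k : fieldType) m p p' (e : p = p') (A : 'M[k]_(m, p)) :
  A *m castmx (erefl p, e) 1%:M = castmx (erefl m, e) A.
Proof. by case: p' / e; rewrite !castmx_id mulmx1. Qed.

Lemma cast1_mulmx (k : fieldType) m m' p p' (e : m = m') (e' : p = p')
    (A : 'M[k]_(m, p)) :
  castmx (erefl m, e) 1%:M *m castmx (e, e') A = castmx (erefl m, e') A.
Proof. by case: m' / e; case: p' / e'; rewrite !castmx_id mul1mx. Qed.

Lemma cast1K (k : fieldType) m m' (e : m = m') :
  castmx (erefl m, e) (1%:M : 'M[k]_m) *m castmx (e, erefl m) 1%:M = 1%:M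
  /\ castmx (e, erefl m) (1%:M : 'M[k]_m) *m castmx (erefl m, e) 1%:M = 1%:M.
Proof. by case: m' / e; rewrite !castmx_id mul1mx. Qed.

Section Isomorphisms.
Variables (T : Type) (k : fieldType) (le : rel T).
Implicit Types M N P Q : rep T k.

Lemma iso_refl M : iso le M M.
Proof.
exists (fun=> 1%:M), (fun=> 1%:M); split => [x|x y _]; first by rewrite mul1mx.
by rewrite mulmx1 mul1mx.
Qed.

Lemma iso_sym M N : iso le M N -> iso le N M.
Proof.
move=> [f [g [fg nf]]]; exists g, f; split => [x|x y lxy]; first by have [] := fg x.
have [fgx gfx] := fg x; have [fgy _] := fg y.
have -> : g x *m rmap M x y = g x *m (rmap M x y *m f y) *m g y.
  by rewrite -!mulmxA fgy mulmx1.
by rewrite nf // !mulmxA gfx mul1mx.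
Qed.

Lemma iso_trans M N P : iso le M N -> iso le N P -> iso le M P.
Proof.
move=> [f [g [fg nf]]] [f' [g' [fg' nf']]].
exists (fun x => f x *m f' x), (fun x => g' x *m g x); split => [x|x y lxy].
  have [a1 a2] := fg x; have [b1 b2] := fg' x; split.
    by rewrite -!mulmxA (mulmxA (f' x)) b1 mul1mx a1.
  by rewrite -!mulmxA (mulmxA (g x)) a2 mul1mx b2.
by rewrite mulmxA nf // -mulmxA nf' // mulmxA.
Qed.

Lemma iso_dsum M M' N N' :
  iso le M M' -> iso le N N' -> iso le (dsum M N) (dsum M' N').
Proof.
move=> [f [g [fg nf]]] [f' [g' [fg' nf']]].
exists (fun x => block_mx (f x) 0 0 (f' x)), (fun x => block_mx (g x) 0 0 (g' x)).
split => [x|x y lxy] /=; rewrite !mulmx_block !mulmx0 !mul0mx !addr0 !add0r.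
  have [a1 a2] := fg x; have [b1 b2] := fg' x.
  by rewrite a1 a2 b1 b2 -!scalar_mx_block.
by rewrite nf // nf'.
Qed.

Lemma iso_dsumC M N : iso le (dsum M N) (dsum N M).
Proof.
exists (fun=> block_mx 0 1%:M 1%:M 0), (fun=> block_mx 0 1%:M 1%:M 0).
split => [x|x y lxy] /=; rewrite !mulmx_block !mulmx0 !mul0mx !addr0 !add0r.
  by rewrite !mulmx1 -!scalar_mx_block.
by rewrite !mulmx1 !mul1mx.
Qed.

Lemma iso_cast M N (e : forall x, rdim M x = rdim N x) :
  (forall x y, le x y -> rmap N x y = castmx (e x, e y) (rmap M x y)) ->
  iso le M N.
Proof.
move=> eMN; exists (fun x => castmx (erefl _, e x) 1%:M).
exists (fun x => castmx (e x, erefl _) 1%:M).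
by split => [x|x y lxy]; [exact: cast1K | rewrite mulmx_cast1 eMN // cast1_mulmx].
Qed.

Lemma iso_dsumA M N P : iso le (dsum (dsum M N) P) (dsum M (dsum N P)).
Proof.
apply: (@iso_cast (dsum (dsum M N) P) (dsum M (dsum N P))
  (fun x => esym (addnA (rdim M x) (rdim N x) (rdim P x)))) => x y _.
have := @block_mxA k _ _ _ _ _ _ (rmap M x y) 0 0 0 (rmap N x y) 0 0 0 (rmap P x y).
by rewrite /= !row_mx0 !col_mx0.
Qed.

Lemma iso_dsumACA M N P Q :
  iso le (dsum (dsum M N) (dsum P Q)) (dsum (dsum M P) (dsum N Q)).
Proof.
apply: iso_trans (iso_dsumA _ _ _) _.
apply: iso_trans (iso_dsum (iso_refl _) (iso_sym (iso_dsumA _ _ _))) _.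
apply: iso_trans (iso_dsum (iso_refl _) (iso_dsum (iso_dsumC _ _) (iso_refl _))) _.
apply: iso_trans (iso_dsum (iso_refl _) (iso_dsumA _ _ _)) _.
exact: iso_sym (iso_dsumA _ _ _).
Qed.

Lemma rank_dsum M N x y :
  \rank (rmap (dsum M N) x y) = (\rank (rmap M x y) + \rank (rmap N x y))%N.
Proof. exact: rank_diag_block_mx. Qed.

Lemma iso_rank M N x y :
  iso le M N -> le x y -> \rank (rmap M x y) = \rank (rmap N x y).
Proof.
move=> [f [g [fg nf]]] lxy; have [_ gfx] := fg x; have [fgy _] := fg y.
have -> : \rank (rmap M x y) = \rank (rmap M x y *m f y).
  apply/eqP; rewrite eqn_leq mxrankM_maxl andbT.
  by rewrite -{1}[rmap M x y]mulmx1 -fgy mulmxA mxrankM_maxl.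
rewrite nf //; apply/eqP; rewrite eqn_leq mxrankM_maxr /=.
by rewrite -{1}[rmap N x y]mul1mx -gfx -mulmxA mxrankM_maxr.
Qed.

Lemma iso_rdim M N x : iso le M N -> rdim M x = rdim N x.
Proof.
move=> [f [g [fg _]]]; have [fgx gfx] := fg x; apply/eqP; rewrite eqn_leq.
have := mxrankM_maxl (f x) (g x); rewrite fgx mxrank1 => /leq_trans-> //.
have := mxrankM_maxl (g x) (f x); rewrite gfx mxrank1 => /leq_trans-> //.
by rewrite rank_leq_col.
exact: rank_leq_col.
Qed.

Lemma is_module_dsum M N :
  is_module le M -> is_module le N -> is_module le (dsum M N).
Proof.
move=> [M1 M2] [N1 N2]; split => [x lx|x y z lxy lyz] /=.
  by rewrite M1 // N1 // -scalar_mx_block.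
by rewrite mulmx_block !mulmx0 !mul0mx !addr0 !add0r M2 // N2.
Qed.

Lemma is_module_zero : is_module le (zero_rep T k).
Proof. by split => [x _|x y z _ _] /=; apply/matrixP => -[]. Qed.

Lemma iso_indicator (c c' : T -> bool) : c =1 c' ->
  iso le (@Rep T k (fun u => nat_of_bool (c u)) (fun _ _ => const_mx 1))
         (@Rep T k (fun u => nat_of_bool (c' u)) (fun _ _ => const_mx 1)).
Proof.
move=> ecc'.
apply: (@iso_cast (@Rep T k (fun u => nat_of_bool (c u)) (fun _ _ => const_mx 1))
  (@Rep T k (fun u => nat_of_bool (c' u)) (fun _ _ => const_mx 1))
  (fun u => congr1 nat_of_bool (ecc' u))) => u v _.
by apply/matrixP => i j; rewrite castmxE !mxE.
Qed.

End Isomorphisms.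

Section Grothendieck.
Variables (T : Type) (k : fieldType) (le : rel T).
Implicit Types x y : vmod T k.

Lemma grEq_refl x : grEq le x x.
Proof. by exists (zero_rep T k); split; [exact: is_module_zero | exact: iso_refl]. Qed.

Lemma grEq_add x x' y y' :
  grEq le x x' -> grEq le y y' -> grEq le (vadd x y) (vadd x' y').
Proof.
move=> [X [mX hX]] [Y [mY hY]]; exists (dsum X Y); split; first exact: is_module_dsum.
apply: iso_trans (iso_dsum (iso_dsumACA _ _ _ _ _) (iso_refl _ _)) _.
apply: iso_trans (iso_dsumACA _ _ _ _ _) _.
apply: iso_trans (iso_dsum hX hY) _.
apply: iso_trans (iso_dsumACA _ _ _ _ _) _.
exact: iso_dsum (iso_dsumACA _ _ _ _ _) (iso_refl _ _).
Qed.

Lemma grEq_opp x x' : grEq le x x' -> grEq le (vopp x) (vopp x').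
Proof.
move=> [X [mX hX]]; exists X; split => //.
apply: iso_trans (iso_dsum (iso_dsumC _ _ _) (iso_refl _ _)) _.
apply: iso_trans (iso_sym hX) _.
exact: iso_dsum (iso_dsumC _ _ _) (iso_refl _ _).
Qed.

Lemma grEq_scale z x x' : grEq le x x' -> grEq le (vscale z x) (vscale z x').
Proof.
have grEq_nat m : grEq le x x' -> grEq le (vnat m x) (vnat m x').
  by move=> h; elim: m => [|m IH] /=; [exact: grEq_refl | exact: grEq_add].
by case: z => m h; [exact: grEq_nat | apply/grEq_opp/grEq_nat].
Qed.

Lemma grEq_subrel (le' : rel T) x y : subrel le' le -> grEq le x y -> grEq le' x y.
Proof.
move=> sub [X [[X1 X2] [f [g [fg nf]]]]]; exists X; split.
  by split => [z /sub|a b c /sub h1 /sub h2]; [exact: X1 | exact: X2].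
by exists f, g; split => // a b /sub; exact: nf.
Qed.

Lemma is_vmod_cls (M : rep T k) : is_module le M -> is_vmod le (cls M).
Proof. by split => //; exact: is_module_zero. Qed.

Lemma is_vmod_add x y : is_vmod le x -> is_vmod le y -> is_vmod le (vadd x y).
Proof. by move=> [x1 x2] [y1 y2]; split; apply: is_module_dsum. Qed.

Lemma is_vmod_opp x : is_vmod le x -> is_vmod le (vopp x).
Proof. by move=> [x1 x2]; split. Qed.

Lemma is_vmod_scale z x : is_vmod le x -> is_vmod le (vscale z x).
Proof.
have is_vmod_nat m : is_vmod le x -> is_vmod le (vnat m x).
  move=> h; elim: m => [|m IH] /=; last exact: is_vmod_add.
  by split; exact: is_module_zero.
by case: z => m h; [exact: is_vmod_nat | apply/is_vmod_opp/is_vmod_nat].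
Qed.

Definition vrank x (i j : T) : int :=
  (\rank (rmap x.1 i j))%:Z - (\rank (rmap x.2 i j))%:Z.

Lemma vrank_cls (M : rep T k) i j : vrank (cls M) i j = (\rank (rmap M i j))%:Z.
Proof. by rewrite /vrank /= mxrank0 subr0. Qed.

Lemma vrank_add x y i j : vrank (vadd x y) i j = vrank x i j + vrank y i j.
Proof. by rewrite /vrank /= !rank_dsum !PoszD; ring. Qed.

Lemma vrank_opp x i j : vrank (vopp x) i j = - vrank x i j.
Proof. by rewrite /vrank /=; ring. Qed.

Lemma vrank_zero i j : vrank (vzero T k) i j = 0.
Proof. by rewrite /vrank /= mxrank0 subrr. Qed.

Lemma vrank_scale z x i j : vrank (vscale z x) i j = z * vrank x i j.
Proof.
have vrank_nat m : vrank (vnat m x) i j = m%:Z * vrank x i j.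
  elim: m => [|m IH]; first by rewrite mul0r vrank_zero.
  by rewrite /= vrank_add IH -addn1 PoszD; ring.
case: z => m; first exact: vrank_nat.
by rewrite (_ : vscale _ _ = vopp (vnat m.+1 x)) // vrank_opp vrank_nat NegzE; ring.
Qed.

Lemma grEq_vrank x y i j : grEq le x y -> le i j -> vrank x i j = vrank y i j.
Proof.
move=> [X [_ h]] lij; have := iso_rank h lij; rewrite !rank_dsum => /eqP.
rewrite eqn_add2r => /eqP e; rewrite /vrank; apply/eqP; rewrite subr_eq addrC addrA.
by rewrite -subr_eq opprK -!PoszD e addnC.
Qed.

End Grothendieck.

Lemma vpull_add (U T : Type) (k : fieldType) (F : U -> T) (x y : vmod T k) :
  vpull F (vadd x y) = vadd (vpull F x) (vpull F y).
Proof. by []. Qed.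

Lemma vpull_scale (U T : Type) (k : fieldType) (F : U -> T) z (x : vmod T k) :
  vpull F (vscale z x) = vscale z (vpull F x).
Proof.
have vpull_nat m : vpull F (vnat m x) = vnat m (vpull F x).
  by elim: m => [|m IH] //=; rewrite -IH.
by case: z => m /=; rewrite -vpull_nat.
Qed.

Lemma mx_dim0_eq (k : fieldType) m p (X Y : 'M[k]_(m, p)) :
  (m == 0)%N || (p == 0)%N -> X = Y.
Proof.
case/orP => /eqP e; apply/matrixP => i j; exfalso.
  by move: (ltn_ord i); move: (i : nat) => i'; rewrite e.
by move: (ltn_ord j); move: (j : nat) => j'; rewrite e.
Qed.

Lemma mul_const_mx (k : fieldType) m p q (x y : k) :
  (const_mx x : 'M_(m, p)) *m (const_mx y : 'M_(p, q)) = const_mx (x * y *+ p).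
Proof.
apply/matrixP => i j; rewrite !mxE.
under eq_bigr do rewrite !mxE.
by rewrite sumr_const card_ord.
Qed.

Lemma const_mx1_scalar (k : fieldType) m : (m <= 1)%N -> (const_mx 1 : 'M[k]_m) = 1%:M.
Proof.
move=> hm; apply/matrixP => i j; rewrite !mxE.
have -> : i = j by apply/val_inj => /=; move: (ltn_ord i) (ltn_ord j); lia.
by rewrite eqxx.
Qed.

Lemma mx_neq0_sandwich (k : fieldType) m p (X : 'M[k]_(m, p)) : X != 0 ->
  exists (v : 'M[k]_(1, m)) (w : 'M[k]_(p, 1)), v *m X *m w = 1%:M.
Proof.
move=> nzX; have [[s t] /= Xst] : exists st : 'I_m * 'I_p, X st.1 st.2 != 0.
  apply/existsP; apply: contraR nzX => /existsPn X0.
  by apply/eqP/matrixP => s t; rewrite mxE; apply/eqP/negPn/(X0 (s, t)).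
exists (delta_mx 0 s), ((X s t)^-1 *: delta_mx t 0).
rewrite -rowE -scalemxAr -colE; apply/matrixP => i j.
by rewrite (ord1 i) (ord1 j) !mxE eqxx mulVf.
Qed.

(* Splitting off a summand J_{a,b}: [a] is the lowest point of the support of
   [M], [b] the highest point reached from [a], and [v], [w] pick a vector at
   [a] whose image at [b] is nonzero, together with a functional detecting it. *)
Section IntervalSplit.
Variables (k : fieldType) (n : nat) (M : rep 'I_n.+1 k).
Hypothesis modM : is_module (@leN n) M.
Variables (a b : 'I_n.+1).
Hypothesis rdim_lt_a : forall i : 'I_n.+1, (i < a)%N -> rdim M i = 0%N.
Hypothesis rmap_gt_b : forall j : 'I_n.+1, (b < j)%N -> rmap M a j = 0.
Variables (v : 'M[k]_(1, rdim M a)) (w : 'M[k]_(rdim M b, 1)).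
Hypothesis vw1 : v *m rmap M a b *m w = 1%:M.

Local Notation d := (rdim M).
Local Notation A := (rmap M).
Local Notation inab i := ((a <= i)%N && (i <= b)%N).

Lemma rmap_comp (i j l : 'I_n.+1) :
  (i <= j)%N -> (j <= l)%N -> A i j *m A j l = A i l.
Proof. exact: modM.2. Qed.

Definition vecJ (i : 'I_n.+1) := v *m A a i.
Definition covJ (i : 'I_n.+1) := A i b *m w.

Definition embJ (i : 'I_n.+1) : 'M[k]_(inab i, d i) := const_mx 1 *m vecJ i.
Definition retJ (i : 'I_n.+1) : 'M[k]_(d i, inab i) := covJ i *m const_mx 1.

Lemma vecJ_comp (i j : 'I_n.+1) :
  (a <= i)%N -> (i <= j)%N -> vecJ i *m A i j = vecJ j.
Proof. by move=> ai ij; rewrite /vecJ -mulmxA rmap_comp. Qed.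

Lemma comp_covJ (i j : 'I_n.+1) :
  (i <= j)%N -> (j <= b)%N -> A i j *m covJ j = covJ i.
Proof. by move=> ij jb; rewrite /covJ mulmxA rmap_comp. Qed.

Lemma retJ_natural (i j : 'I_n.+1) : (i <= j)%N ->
  A i j *m retJ j = retJ i *m (const_mx 1 : 'M_(inab i, inab j)).
Proof.
move=> ij; have [/andP [aj jb]|nj] := orP (orbN (inab j)); last first.
  by apply: mx_dim0_eq; rewrite (negbTE nj) eqxx orbT.
rewrite /retJ mulmxA comp_covJ // -mulmxA mul_const_mx mulr1.
have [ini|nini] := orP (orbN (inab i)); first by rewrite ini mulr1n.
apply: mx_dim0_eq; rewrite rdim_lt_a //.
by move: nini; rewrite (leq_trans ij jb) andbT -ltnNge.
Qed.

Lemma embJ_natural (i j : 'I_n.+1) : (i <= j)%N ->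
  embJ i *m A i j = (const_mx 1 : 'M_(inab i, inab j)) *m embJ j.
Proof.
move=> ij; have [/andP [ai ib]|ni] := orP (orbN (inab i)); last first.
  by apply: mx_dim0_eq; rewrite (negbTE ni) eqxx.
rewrite /embJ -mulmxA vecJ_comp // mulmxA mul_const_mx mulr1.
have [inj|ninj] := orP (orbN (inab j)); first by rewrite inj mulr1n.
rewrite /vecJ rmap_gt_b ?mulmx0 //.
by move: ninj; rewrite (leq_trans ai ij) /= -ltnNge.
Qed.

Lemma embJK (i : 'I_n.+1) : embJ i *m retJ i = 1%:M.
Proof.
have [/andP [ai ib]|ni] := orP (orbN (inab i)); last first.
  by apply: mx_dim0_eq; rewrite (negbTE ni) eqxx.
have vc1 : vecJ i *m covJ i = 1%:M.
  by rewrite /vecJ /covJ mulmxA -(mulmxA v) rmap_comp.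
rewrite /embJ /retJ mulmxA -(mulmxA _ (vecJ i)) vc1 mulmx1 mul_const_mx mulr1.
by rewrite const_mx1_scalar // leq_b1.
Qed.

Definition cprJ (i : 'I_n.+1) := 1%:M - retJ i *m embJ i.

Lemma cprJ_idem (i : 'I_n.+1) : cprJ i *m cprJ i = cprJ i.
Proof.
have idemP : retJ i *m embJ i *m (retJ i *m embJ i) = retJ i *m embJ i.
  by rewrite mulmxA -(mulmxA (retJ i)) embJK mulmx1.
by rewrite /cprJ mulmxBl mul1mx mulmxBr mulmx1 idemP subrr subr0.
Qed.

Lemma cprJ_natural (i j : 'I_n.+1) : (i <= j)%N -> cprJ i *m A i j = A i j *m cprJ j.
Proof.
move=> ij; rewrite /cprJ mulmxBl mulmxBr mul1mx mulmx1 -mulmxA embJ_natural //.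
by rewrite mulmxA -retJ_natural // -mulmxA.
Qed.

Lemma embJ_cprJ (i : 'I_n.+1) : embJ i *m cprJ i = 0.
Proof. by rewrite /cprJ mulmxBr mulmx1 mulmxA embJK mul1mx subrr. Qed.

Lemma cprJ_retJ (i : 'I_n.+1) : cprJ i *m retJ i = 0.
Proof. by rewrite /cprJ mulmxBl mul1mx -mulmxA embJK mulmx1 subrr. Qed.

Definition basC (i : 'I_n.+1) := row_base (cprJ i).

Lemma basC_sub (i : 'I_n.+1) : (basC i <= cprJ i)%MS.
Proof. by rewrite /basC eq_row_base. Qed.

Lemma cprJ_sub (i : 'I_n.+1) : (cprJ i <= basC i)%MS.
Proof. by rewrite /basC eq_row_base. Qed.

Lemma sub_cprJ (i : 'I_n.+1) m (X : 'M_(m, d i)) : (X <= cprJ i)%MS -> X *m cprJ i = X.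
Proof. by case/submxP => D ->; rewrite -mulmxA cprJ_idem. Qed.

Lemma basC_pinv (i : 'I_n.+1) : basC i *m pinvmx (basC i) = 1%:M.
Proof.
by apply: (row_free_inj (row_base_free (cprJ i))); rewrite mulmxKpV // mul1mx.
Qed.

Lemma basC_comp (i j : 'I_n.+1) : (i <= j)%N -> (basC i *m A i j <= basC j)%MS.
Proof.
move=> ij; rewrite -(sub_cprJ (basC_sub _)) -mulmxA cprJ_natural // mulmxA.
exact: submx_trans (submxMl _ _) (cprJ_sub j).
Qed.

Definition complJ := @Rep 'I_n.+1 k (fun i => \rank (cprJ i))
  (fun i j => basC i *m A i j *m pinvmx (basC j)).

Lemma complJ_module : is_module (@leN n) complJ.
Proof.
split => [i _|i j l ij jl] /=; first by rewrite (modM.1 i) ?mulmx1 ?basC_pinv // /leN.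
set X := basC i *m A i j *m pinvmx (basC j).
rewrite (mulmxA X) (mulmxA X (basC j)) mulmxKpV ?basC_comp //.
by rewrite -(mulmxA (basC i)) rmap_comp.
Qed.

Lemma iso_dsum_Jmod_complJ : iso (@leN n) M (dsum (Jmod k n a b) complJ).
Proof.
exists (fun i => row_mx (retJ i) (cprJ i *m pinvmx (basC i))).
exists (fun i => col_mx (embJ i) (basC i)).
split => [i|i j ij].
  split; first by rewrite mul_row_col mulmxKpV ?cprJ_sub // /cprJ addrC subrK.
  have basC_retJ : basC i *m retJ i = 0.
    by rewrite -(sub_cprJ (basC_sub _)) -mulmxA cprJ_retJ mulmx0.
  rewrite mul_col_row embJK mulmxA embJ_cprJ mul0mx basC_retJ.
  by rewrite mulmxA sub_cprJ ?basC_sub // basC_pinv -scalar_mx_block.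
rewrite /= mul_mx_row mul_row_block !mulmx0 addr0 add0r retJ_natural //.
congr row_mx; rewrite (mulmxA (cprJ i *m _)) (mulmxA (cprJ i *m _) (basC i)).
by rewrite mulmxKpV ?cprJ_sub // cprJ_natural // mulmxA.
Qed.

End IntervalSplit.

Section RankInvariant.
Variables (k : fieldType) (n : nat).
Local Notation le := (@leN n).
Implicit Types M N : rep 'I_n.+1 k.

Definition total_dim M := (\sum_(i < n.+1) rdim M i)%N.

Lemma rank_rmap_diag M i : is_module le M -> \rank (rmap M i i) = rdim M i.
Proof. by move=> [M1 _]; rewrite M1 ?mxrank1 // /leN. Qed.

Lemma iso_rdim0 M N :
  (forall i, rdim M i = 0%N) -> (forall i, rdim N i = 0%N) -> iso le M N.
Proof.
move=> M0 N0; exists (fun=> 0), (fun=> 0).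
by split => [x|x y _]; [split|]; apply: mx_dim0_eq; rewrite ?M0 ?N0.
Qed.

Lemma interval_support M i0 : is_module le M -> (0 < rdim M i0)%N ->
  exists a b : 'I_n.+1, [/\ (a <= b)%N, forall i : 'I_n.+1, (i < a)%N -> rdim M i = 0%N,
    forall j : 'I_n.+1, (b < j)%N -> rmap M a j = 0 & rmap M a b != 0].
Proof.
move=> modM posi0.
case: (@arg_minnP _ i0 (fun i => 0 < rdim M i)%N (fun i : 'I_n.+1 => i : nat) posi0)
  => a posa mina.
have nzaa : rmap M a a != 0 by rewrite -mxrank_eq0 rank_rmap_diag // -lt0n.
have aP : (a <= a)%N && (rmap M a a != 0) by rewrite leqnn.
case: (@arg_maxnP _ a (fun j : 'I_n.+1 => (a <= j)%N && (rmap M a j != 0))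
  (fun j : 'I_n.+1 => j : nat) aP) => b /andP [ab nzab] maxb.
exists a, b; split => // [i ia|j bj].
  by apply/eqP; rewrite -leqn0 leqNgt; apply/negP => /mina; rewrite leqNgt ia.
apply/eqP/negP => /negP nzaj.
by have := maxb j; rewrite (leq_trans ab (ltnW bj)) nzaj /= leqNgt bj => /(_ isT).
Qed.

Lemma rdim_eq_of_rank_eq M N : is_module le M -> is_module le N ->
  (forall i j : 'I_n.+1, (i <= j)%N -> \rank (rmap M i j) = \rank (rmap N i j)) ->
  forall i, rdim M i = rdim N i.
Proof.
by move=> modM modN rkMN i; rewrite -(rank_rmap_diag i modM) -(rank_rmap_diag i modN) rkMN.
Qed.

(* Split the same J_{a,b} off both modules and recurse on the complements,
   whose total dimension is smaller. *)
Lemma iso_of_rank_eq M N : is_module le M -> is_module le N ->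
  (forall i j : 'I_n.+1, (i <= j)%N -> \rank (rmap M i j) = \rank (rmap N i j)) ->
  iso le M N.
Proof.
move: {2}(total_dim M).+1 (leqnn (total_dim M).+1) => c.
elim: c M N => [|c IH] M N dimM modM modN rkMN; first by rewrite ltn0 in dimM.
have rdimMN := rdim_eq_of_rank_eq modM modN rkMN.
have [i0 posi0|M0] := pickP (fun i : 'I_n.+1 => 0 < rdim M i)%N; last first.
  by apply: iso_rdim0 => i; rewrite -?rdimMN; apply/eqP; rewrite -leqn0 leqNgt M0.
have [a [b [ab rdimM_lt_a rmapM_gt_b nzM]]] := interval_support modM posi0.
have rdimN_lt_a (i : 'I_n.+1) : (i < a)%N -> rdim N i = 0%N.
  by move=> ia; rewrite -rdimMN rdimM_lt_a.
have rmapN_gt_b (j : 'I_n.+1) : (b < j)%N -> rmap N a j = 0.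
  move=> bj; apply/eqP; rewrite -mxrank_eq0 -rkMN ?mxrank_eq0 ?rmapM_gt_b //.
  exact: leq_trans ab (ltnW bj).
have nzN : rmap N a b != 0 by rewrite -mxrank_eq0 -rkMN // mxrank_eq0.
have [vM [wM vwM]] := mx_neq0_sandwich nzM.
have [vN [wN vwN]] := mx_neq0_sandwich nzN.
have isoM := iso_dsum_Jmod_complJ modM rdimM_lt_a rmapM_gt_b vwM.
have isoN := iso_dsum_Jmod_complJ modN rdimN_lt_a rmapN_gt_b vwN.
have dim_compl : (total_dim (complJ vM wM) < c)%N.
  move: dimM; rewrite /total_dim (eq_bigr _ (fun i _ => iso_rdim i isoM)) big_split /=.
  rewrite (bigD1 a) //= leqnn ab ltnS => /(leq_trans _); apply.
  by rewrite -addnA add1n ltnS leq_addl.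
have rk_compl (i j : 'I_n.+1) : (i <= j)%N ->
    \rank (rmap (complJ vM wM) i j) = \rank (rmap (complJ vN wN) i j).
  move=> ij; apply/eqP; rewrite -(eqn_add2l (\rank (rmap (Jmod k n a b) i j))).
  by rewrite -!rank_dsum -(iso_rank isoM ij) -(iso_rank isoN ij) rkMN.
apply: iso_trans isoM (iso_trans _ (iso_sym isoN)).
apply/iso_dsum/IH => //; [exact: iso_refl | exact: complJ_module ..].
Qed.

End RankInvariant.

Section Modules.
Variables (k : fieldType) (n : nat).
Local Notation le := (@leN n).

Lemma grEq_of_vrank_eq (x y : vmod 'I_n.+1 k) : is_vmod le x -> is_vmod le y ->
  (forall i j : 'I_n.+1, (i <= j)%N -> vrank x i j = vrank y i j) -> grEq le x y.
Proof.
move=> [x1 x2] [y1 y2] vrxy; exists (zero_rep _ k); split; first exact: is_module_zero.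
apply: iso_of_rank_eq; do ?apply: is_module_dsum => //; try exact: is_module_zero.
move=> i j ij; rewrite !rank_dsum mxrank0 !addn0; apply/eqP; rewrite -eqz_nat.
move: (vrxy i j ij); rewrite /vrank !PoszD => /eqP; rewrite subr_eq => /eqP ->.
by rewrite addrAC subrK addrC.
Qed.

Lemma Jmod_module a b : is_module le (Jmod k n a b).
Proof.
split => [x _|x y z xy yz] /=; first by rewrite const_mx1_scalar // leq_b1.
rewrite mul_const_mx mulr1.
have [/andP [ax xb]|nx] := orP (orbN ((a <= x)%N && (x <= b)%N)); last first.
  by apply: mx_dim0_eq; rewrite (negbTE nx).
have [/andP [az zb]|nz] := orP (orbN ((a <= z)%N && (z <= b)%N)); last first.
  by apply: mx_dim0_eq; rewrite (negbTE nz) orbT.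
by rewrite (leq_trans ax xy) (leq_trans yz zb).
Qed.

Lemma Smod_module : is_module le (Smod k n).
Proof.
split => [x _|x y z xy yz] /=; first by rewrite eqxx.
have [<-|nxy] := eqVneq x y; first by rewrite mul1mx.
rewrite mul0mx; suff /negbTE -> : x != z by [].
apply: contra nxy => /eqP xz; apply/eqP/val_inj/eqP.
by move: xy yz; rewrite /leN xz eqn_leq => -> ->.
Qed.

Lemma rank_Jmod a b (i j : 'I_n.+1) : \rank (rmap (Jmod k n a b) i j) =
  [&& (a <= i)%N, (i <= b)%N, (a <= j)%N & (j <= b)%N].
Proof.
rewrite /= andbA.
have [/andP [ai ib]|ni] := orP (orbN ((a <= i)%N && (i <= b)%N)); last first.
  rewrite (negbTE ni); apply/eqP; rewrite -leqn0.
  by rewrite (leq_trans (rank_leq_row _)) ?(negbTE ni).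
have [/andP [aj jb]|nj] := orP (orbN ((a <= j)%N && (j <= b)%N)); last first.
  rewrite (negbTE nj) andbF; apply/eqP; rewrite -leqn0.
  by rewrite (leq_trans (rank_leq_col _)) ?(negbTE nj).
rewrite ai ib aj jb /=; apply/eqP; rewrite eqn_leq (leq_trans (rank_leq_row _)) ?ai ?ib //.
rewrite lt0n mxrank_eq0; apply/eqP => /matrixP/(_ ord0 ord0).
by rewrite !mxE; apply/eqP/oner_neq0.
Qed.

Lemma rank_Smod (i j : 'I_n.+1) : \rank (rmap (Smod k n) i j) = (i == j).
Proof. by rewrite /=; case: (i == j); rewrite ?mxrank1 ?mxrank0. Qed.

End Modules.

Section FaceRelations.
Variables (k : fieldType) (n : nat).
Implicit Types x : vmod 'I_n.+1 k.

Definition srel_of (i j : 'I_n.+1) (lt_ij : (i < j)%N) : srel n :=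
  exist (fun p : 'I_n.+1 * 'I_n.+1 => (p.1 < p.2)%N) (i, j) lt_ij.

Lemma leG_leE : subrel (@leG n) (@leE n).
Proof.
move=> [[i j] /= ij] [[i' j'] /= ij']; rewrite /leG /leE /= xpair_eqE.
by case/orP => [/andP [/eqP -> /eqP ->]|ji']; rewrite ?leqnn //; apply/andP; split; lia.
Qed.

Lemma E0_G0 x : E0 x -> G0 x.
Proof. exact/grEq_subrel/leG_leE. Qed.

Lemma G0_vrank x (i j i' j' : 'I_n.+1) : G0 x -> (i < j)%N -> (i' < j')%N ->
  (j <= i')%N || ((i == i' :> nat) && (j == j' :> nat)) -> vrank x j j' = vrank x i i'.
Proof.
move=> G0x ij ij' le_ij; have le_rel : leG (srel_of ij) (srel_of ij').
  by rewrite /leG /= xpair_eqE orbC -!val_eqE.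
exact: (grEq_vrank G0x le_rel).
Qed.

Lemma E0_vrank x (i j i' j' : 'I_n.+1) : E0 x -> (i < j)%N -> (i' < j')%N ->
  (i <= i')%N -> (j <= j')%N -> vrank x j j' = vrank x i i'.
Proof.
move=> E0x ij ij' ii' jj'; have le_rel : leE (srel_of ij) (srel_of ij').
  by rewrite /leE /= ii' jj'.
exact: (grEq_vrank E0x le_rel).
Qed.

(* Junk outside [0, n], where [inord] returns [ord0]. *)
Definition rk x (i j : nat) : int := vrank x (inord i) (inord j).

Lemma vrank_rk x (i j : 'I_n.+1) : vrank x i j = rk x i j.
Proof. by rewrite /rk !inord_val. Qed.

Lemma rk_add x y i j : rk (vadd x y) i j = rk x i j + rk y i j.
Proof. exact: vrank_add. Qed.

Lemma rk_scale z x i j : rk (vscale z x) i j = z * rk x i j.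
Proof. exact: vrank_scale. Qed.

Lemma grEq_rk x y (i j : nat) :
  grEq (@leN n) x y -> (i <= j)%N -> (j <= n)%N -> rk x i j = rk y i j.
Proof.
move=> xy ij jn; apply: grEq_vrank xy _.
by rewrite /leN !inordK //; lia.
Qed.

Section Shape.
Variable x : vmod 'I_n.+1 k.
Hypothesis G0x : G0 x.

Lemma G0_rk (i j i' j' : nat) : (i < j)%N -> (j <= n)%N -> (i' < j')%N -> (j' <= n)%N ->
  (j <= i')%N || ((i == i') && (j == j')) -> rk x j j' = rk x i i'.
Proof.
move=> ij jn ij' jn' le_ij; rewrite /rk.
by apply: G0_vrank; rewrite ?inordK //; lia.
Qed.

Lemma rk_diag j : (j <= n)%N -> rk x j j = rk x 0 0.
Proof. by case: j => // j jn; apply: G0_rk; rewrite ?eqxx ?orbT //; lia. Qed.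

Lemma rk_adjacent j : (0 < j)%N -> (j <= n)%N -> rk x j.-1 j = rk x 0 1.
Proof.
elim: j => // -[_ //|j] IH _ jn.
by rewrite -IH //; last lia; apply: G0_rk => /=; lia.
Qed.

Lemma rk_off_diag i j : (i < j)%N -> (j <= n)%N -> ~~ ((i == 0%N) && (j == n)) ->
  rk x i j = rk x 0 1.
Proof.
case: i => [|i] ij jn; last first.
  by move=> _; rewrite (@G0_rk i i.+1 i.+1 j) ?(rk_adjacent (j := i.+1)) //; lia.
rewrite eqxx /= => jNn; rewrite -(@G0_rk 0 j j j.+1) ?(rk_adjacent (j := j.+1)) //; lia.
Qed.

Lemma G0_rk_shape i j : (i <= j)%N -> (j <= n)%N ->
  rk x i j = if i == j then rk x 0 0
             else if (i == 0%N) && (j == n) then rk x 0 n else rk x 0 1.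
Proof.
move=> ij jn; have [->|nij] := eqVneq i j; first exact: rk_diag.
case: ifP => [/andP [/eqP -> /eqP ->] //|/negbT].
by apply: rk_off_diag => //; lia.
Qed.

End Shape.

End FaceRelations.

Section Classes.
Variables (k : fieldType) (n : nat).
Hypothesis n_ge2 : (2 <= n)%N.
Local Notation le := (@leN n).
Local Notation J := (cls (Jmod k n 0 n)).
Local Notation S := (cls (Smod k n)).
Local Notation T := (Tcls k n).
Implicit Types x y : vmod 'I_n.+1 k.

Lemma grEq_of_rk_eq x y : is_vmod le x -> is_vmod le y ->
  (forall i j, (i <= j)%N -> (j <= n)%N -> rk x i j = rk y i j) -> grEq le x y.
Proof.
move=> modx mody rkxy; apply: grEq_of_vrank_eq => // i j ij.
by rewrite !vrank_rk rkxy // -ltnS.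
Qed.

Lemma is_vmod_J : is_vmod le J.
Proof. exact/is_vmod_cls/Jmod_module. Qed.

Lemma is_vmod_S : is_vmod le S.
Proof. exact/is_vmod_cls/Smod_module. Qed.

Lemma is_vmod_T : is_vmod le T.
Proof.
by do ?[apply: is_vmod_add | apply: is_vmod_opp]; apply/is_vmod_cls/Jmod_module.
Qed.

Lemma rk_J i j : (i <= j)%N -> (j <= n)%N -> rk J i j = 1.
Proof. by move=> ij jn; rewrite /rk vrank_cls rank_Jmod !inordK //; lia. Qed.

Lemma rk_S i j : (i <= n)%N -> (j <= n)%N -> rk S i j = (i == j : int).
Proof.
move=> i_n jn; rewrite /rk vrank_cls rank_Smod -val_eqE /=.
by rewrite !inordK // ltnS.
Qed.

Lemma rk_T i j : (i <= j)%N -> (j <= n)%N -> rk T i j = 1 - ((i == 0%N) && (j == n) : int).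
Proof.
move=> ij jn; rewrite /rk /Tcls /vsub !vrank_add vrank_opp !vrank_cls !rank_Jmod.
by rewrite !inordK //; lia.
Qed.

Lemma E0_J : E0 J.
Proof.
exists (zero_rep _ k); split; first exact: is_module_zero.
apply: iso_dsum (iso_dsum _ (iso_refl _ _)) (iso_refl _ _).
by apply: iso_indicator => -[[i j] /= ij]; rewrite /d0 /d1 /=; have := ltn_ord j; lia.
Qed.

(* As 0 < j and i < n for every strict relation ij, the pullbacks satisfy
   d0^*J_{0,n-1} = d0^*J_{1,n-1}, d0^*J_{1,n} = d1^*J_{0,n-1} and
   d1^*J_{1,n-1} = d1^*J_{1,n}; the rest is a reshuffling of summands. *)
Lemma E0_T : E0 T.
Proof.
exists (zero_rep _ k); split; first exact: is_module_zero.
apply: iso_dsum _ (iso_refl _ _).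
have iso_pull (F G : srel n -> 'I_n.+1) (a b a' b' : nat) :
    (forall r : srel n, ((a <= F r) && (F r <= b))%N = ((a' <= G r) && (G r <= b'))%N) ->
    iso (@leE n) (pull F (Jmod k n a b)) (pull G (Jmod k n a' b')).
  exact: iso_indicator.
have iso1 : iso (@leE n) (pull (@d0 n) (Jmod k n 0 n.-1)) (pull (@d0 n) (Jmod k n 1 n.-1)).
  by apply: iso_pull => -[[i j] /= ij]; rewrite /d0 /=; have := ltn_ord j; lia.
have iso2 : iso (@leE n) (pull (@d0 n) (Jmod k n 1 n)) (pull (@d1 n) (Jmod k n 0 n.-1)).
  by apply: iso_pull => -[[i j] /= ij]; rewrite /d0 /d1 /=; have := ltn_ord j; lia.
have iso3 : iso (@leE n) (pull (@d1 n) (Jmod k n 1 n.-1)) (pull (@d1 n) (Jmod k n 1 n)).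
  by apply: iso_pull => -[[i j] /= ij]; rewrite /d1 /=; have := ltn_ord j; lia.
pose Z := zero_rep (srel n) k.
apply: iso_trans (iso_dsum (iso_dsum (iso_dsum iso1 iso2) (iso_refl _ Z))
                           (iso_dsum (iso_refl _ (dsum Z Z)) iso3)) _.
apply: iso_trans (iso_dsum (iso_refl _ _) (iso_dsumC _ _ _)) _.
apply: iso_trans (iso_dsumACA _ _ _ _ _) _.
apply: iso_trans
  (iso_dsum (iso_trans (iso_dsumA _ _ _ _) (iso_dsumC _ _ _)) (iso_refl _ _)) _.
apply: iso_trans (iso_sym (iso_dsumACA _ _ _ _ _)) _.
exact: iso_dsum (iso_refl _ _) (iso_dsumC _ _ _).
Qed.

Lemma G0_S : G0 S.
Proof.
exists (zero_rep _ k); split; first exact: is_module_zero.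
apply: iso_dsum (iso_dsum _ (iso_refl _ _)) (iso_refl _ _).
exists (fun=> 1%:M), (fun=> 1%:M); split => [r|r s]; first by rewrite mul1mx.
rewrite mulmx1 mul1mx /= /leG /d0 /d1.
case: r s => [[i j] /= ij] [[i' j'] /= ij']; rewrite /= xpair_eqE.
case/orP => [/andP [/eqP -> /eqP ->]|ji']; first by rewrite !eqxx.
suff [/negbTE -> /negbTE ->] : j != j' /\ i != i' by [].
by split; rewrite -val_eqE /=; lia.
Qed.

Definition combG a b c := vadd (vscale a J) (vadd (vscale b S) (vscale c T)).
Definition combE a c := vadd (vscale a J) (vscale c T).

Lemma is_vmod_combE a c : is_vmod le (combE a c).
Proof.
by apply: is_vmod_add; apply: is_vmod_scale; [exact: is_vmod_J | exact: is_vmod_T].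
Qed.

Lemma is_vmod_combG a b c : is_vmod le (combG a b c).
Proof.
apply: is_vmod_add; first exact/is_vmod_scale/is_vmod_J.
by apply: is_vmod_add; apply: is_vmod_scale; [exact: is_vmod_S | exact: is_vmod_T].
Qed.

Lemma rk_combE a c i j : (i <= j)%N -> (j <= n)%N ->
  rk (combE a c) i j = a + c * (1 - ((i == 0%N) && (j == n) : int)).
Proof. by move=> ij jn; rewrite rk_add !rk_scale rk_J // rk_T // mulr1. Qed.

Lemma rk_combG a b c i j : (i <= j)%N -> (j <= n)%N ->
  rk (combG a b c) i j = a + b * (i == j : int) + c * (1 - ((i == 0%N) && (j == n) : int)).
Proof.
move=> ij jn; rewrite !rk_add !rk_scale rk_J // rk_S // ?rk_T //; last exact: leq_trans jn.
by rewrite mulr1 addrA.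
Qed.

Lemma E0_rk_diag x : E0 x -> rk x 0%N 0%N = rk x 0%N 1%N.
Proof.
move=> E0x; pose o i : 'I_n.+1 := inord i.
have [l01 l02 l12] : [/\ (o 0 < o 1)%N, (o 0 < o 2)%N & (o 1 < o 2)%N].
  by rewrite !inordK //; lia.
have e00 := E0_vrank E0x l01 l02 (leqnn _) (ltnW l12).
have e01 := E0_vrank E0x l01 l12 (ltnW l01) (ltnW l12).
by rewrite /rk -e00 e01.
Qed.

Lemma combG_eq0 a b c : grEq le (combG a b c) (vzero _ _) -> [/\ a = 0, b = 0 & c = 0].
Proof.
move=> h; have rk0 i j : (i <= j)%N -> (j <= n)%N -> rk (combG a b c) i j = 0.
  by move=> ij jn; rewrite (grEq_rk h) // /rk vrank_zero.
have n_ge1 : (1 <= n)%N := ltnW n_ge2.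
have n0 : (0 == n)%N = false by apply/negbTE; rewrite eq_sym -lt0n.
have n1 : (1 == n)%N = false by apply/negbTE; rewrite eq_sym neq_ltn n_ge2 orbT.
have := rk0 0%N 0%N isT isT; have := rk0 0%N 1%N isT n_ge1; have := rk0 0%N n isT (leqnn n).
by rewrite !rk_combG //= !eqxx n0 n1 /= => h0n h01 h00; split; lia.
Qed.

Lemma combE_eq0 a c : grEq le (combE a c) (vzero _ _) -> a = 0 /\ c = 0.
Proof.
move=> h; have rk0 i j : (i <= j)%N -> (j <= n)%N -> rk (combE a c) i j = 0.
  by move=> ij jn; rewrite (grEq_rk h) // /rk vrank_zero.
have n0 : (0 == n)%N = false by apply/negbTE; rewrite eq_sym -lt0n ltnW.
have := rk0 0%N 0%N isT isT; have := rk0 0%N n isT (leqnn n).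
by rewrite !rk_combE //= !eqxx n0 /= => h0n h00; split; lia.
Qed.

Lemma E0_combE a c : E0 (combE a c).
Proof.
rewrite /E0 /combE !vpull_add !vpull_scale.
by apply: grEq_add; apply: grEq_scale; [exact: E0_J | exact: E0_T].
Qed.

Lemma G0_rk_formula x i j : G0 x -> (i <= j)%N -> (j <= n)%N ->
  rk x i j = rk x 0%N n + (rk x 0%N 0%N - rk x 0%N 1%N) * (i == j : int)
             + (rk x 0%N 1%N - rk x 0%N n) * (1 - ((i == 0%N) && (j == n) : int)).
Proof.
move=> G0x ij jn; rewrite (G0_rk_shape G0x ij jn).
have [<-|_] := eqVneq i j; last by case: ifP => _ /=; ring.
suff -> : (i == 0%N) && (i == n) = false by rewrite /=; ring.
by apply/negbTE; apply: contraTN n_ge2 => /andP [/eqP -> /eqP <-].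
Qed.

Lemma G0_grEq_combG x : is_vmod le x -> G0 x ->
  grEq le x (combG (rk x 0%N n) (rk x 0%N 0%N - rk x 0%N 1%N) (rk x 0%N 1%N - rk x 0%N n)).
Proof.
move=> modx G0x; apply: grEq_of_rk_eq modx (is_vmod_combG _ _ _) _ => i j ij jn.
by rewrite rk_combG // G0_rk_formula.
Qed.

Lemma rk_addS x m i j : (i <= j)%N -> (j <= n)%N ->
  rk (vadd x (vscale m S)) i j = rk x i j + m * (i == j : int).
Proof. by move=> ij jn; rewrite rk_add rk_scale rk_S // (leq_trans ij jn). Qed.

Lemma G0_grEq_decomp x : is_vmod le x -> G0 x ->
  grEq le x (vadd (combE (rk x 0%N n) (rk x 0%N 1%N - rk x 0%N n))
                  (vscale (rk x 0%N 0%N - rk x 0%N 1%N) S)).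
Proof.
move=> modx G0x; apply: grEq_of_rk_eq => // [|i j ij jn].
  by apply: is_vmod_add; [exact: is_vmod_combE | exact/is_vmod_scale/is_vmod_S].
by rewrite rk_addS // rk_combE // G0_rk_formula //; ring.
Qed.

Lemma E0_grEq_combE x : is_vmod le x -> E0 x ->
  grEq le x (combE (rk x 0%N n) (rk x 0%N 1%N - rk x 0%N n)).
Proof.
move=> modx E0x; apply: grEq_of_rk_eq modx (is_vmod_combE _ _) _ => i j ij jn.
by rewrite rk_combE // (G0_rk_formula (E0_G0 E0x) ij jn) E0_rk_diag // subrr mul0r addr0.
Qed.

Lemma grEq_decomp_uniq e e' m m' : is_vmod le e -> is_vmod le e' -> E0 e -> E0 e' ->
  grEq le (vadd e (vscale m S)) (vadd e' (vscale m' S)) -> m = m' /\ grEq le e e'.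
Proof.
move=> mode mode' E0e E0e' h.
have rkee' i j : (i <= j)%N -> (j <= n)%N ->
    rk e i j + m * (i == j : int) = rk e' i j + m' * (i == j : int).
  by move=> ij jn; rewrite -!rk_addS //; exact: grEq_rk.
have mm' : m = m'.
  have := rkee' 0%N 0%N isT isT; have := rkee' 0%N 1%N isT (ltnW n_ge2).
  by rewrite (E0_rk_diag E0e) (E0_rk_diag E0e') /= => h01 h00; lia.
split => //; subst m'; apply: grEq_of_rk_eq => // i j ij jn.
exact: addIr (rkee' i j ij jn).
Qed.

End Classes.

Theorem proposition5p2 (k : fieldType) (n : nat) (hn : (2 <= n)%N) :
  let J := cls (Jmod k n 0 n) in
  let S := cls (Smod k n) in
  let T := Tcls k n in
  let eqv := grEq (@leN n) in
  [/\ G0 J, G0 S, G0 T,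
      (forall a b c : int,
          eqv (vadd (vscale a J) (vadd (vscale b S) (vscale c T))) (vzero _ _) ->
          [/\ a = 0, b = 0 & c = 0]) &
      (forall x : vmod 'I_n.+1 k, is_vmod (@leN n) x -> G0 x ->
          exists a b c : int,
            eqv x (vadd (vscale a J) (vadd (vscale b S) (vscale c T))))]
  /\
  [/\ E0 J, E0 T,
      (forall a c : int,
          eqv (vadd (vscale a J) (vscale c T)) (vzero _ _) -> a = 0 /\ c = 0) &
      (forall x : vmod 'I_n.+1 k, is_vmod (@leN n) x -> E0 x ->
          exists a c : int, eqv x (vadd (vscale a J) (vscale c T)))]
  /\
  [/\ (forall x : vmod 'I_n.+1 k, is_vmod (@leN n) x -> E0 x -> G0 x),
      (forall x : vmod 'I_n.+1 k, is_vmod (@leN n) x -> G0 x ->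
          exists (e : vmod 'I_n.+1 k) (m : int),
            [/\ is_vmod (@leN n) e, E0 e & eqv x (vadd e (vscale m S))]) &
      (forall (e e' : vmod 'I_n.+1 k) (m m' : int),
          is_vmod (@leN n) e -> is_vmod (@leN n) e' -> E0 e -> E0 e' ->
          eqv (vadd e (vscale m S)) (vadd e' (vscale m' S)) ->
          m = m' /\ eqv e e')].
Proof.
move=> J S T eqv; split; [split | split; split].
- exact/E0_G0/E0_J.
- exact: G0_S.
- exact/E0_G0/E0_T.
- exact: combG_eq0.
- by move=> x modx G0x; do 3 eexists; exact: G0_grEq_combG.
- exact: E0_J.
- exact: E0_T.
- exact: combE_eq0.
- by move=> x modx E0x; do 2 eexists; exact: E0_grEq_combE.
- by move=> x _; exact: E0_G0.
- move=> x modx G0x; do 2 eexists; split; last exact: G0_grEq_decomp.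
  + exact: is_vmod_combE.
  + exact: E0_combE.
- exact: grEq_decomp_uniq.
Qed.
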